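(* Let $\mathbf{L}$ be a distributive lattice, $n\ge1$ an integer and $F$ an upset of $\mathbf{L}$. The following are equivalent: (i) $F$ is an $n$-prime filter; (ii) $F$ is a filter and $F$ is an intersection of at most $n$ prime upsets; (iii) $F$ is an intersection of at most $n$ prime filters; (iv) there is a lattice homomorphism $h\colon\mathbf{L}\to\mathbf{2}^n$ with $F=h^{-1}[\{1\}]$, where $\mathbf{2}^n$ is the Boolean lattice with $n$ atoms and $1$ its top element.
   Context: A filter on a lattice is an upset closed under binary meets (the empty set and the whole lattice count). An upset $F$ is prime if $a\vee b\in F$ implies $a\in F$ or $b\in F$; a prime filter is a filter which is a prime upset. A filter $F$ is $n$-prime if for all $x_1,\dots,x_{n+1}$: $x_1\vee\dots\vee x_{n+1}\in F$ implies $\bigvee_{j\neq i}x_j\in F$ for some $i\in\{1,\dots,n+1\}$. An intersection of zero sets is the whole lattice. Lattice homomorphisms need not preserve bounds. *)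

From HB Require Import structures.
From mathcomp Require Import all_boot all_order.
Set Implicit Arguments. Unset Strict Implicit. Unset Printing Implicit Defensive.
Import Order.Theory.
Local Open Scope order_scope.

Section LatticeDefs.
Context {d : Order.disp_t} {L : distrLatticeType d}.

Definition upset (F : L -> Prop) : Prop :=
  forall x y : L, x <= y -> F x -> F y.

(* filters: upsets closed under binary meets (empty set and L allowed) *)
Definition is_filter (F : L -> Prop) : Prop :=
  upset F /\ forall x y : L, F x -> F y -> F (x `&` y).

Definition prime_upset (F : L -> Prop) : Prop :=
  upset F /\ forall a b : L, F (a `|` b) -> F a \/ F b.

Definition prime_filter (F : L -> Prop) : Prop :=
  is_filter F /\ prime_upset F.

(* Join of the nonempty subfamily (x_j)_{j | P j}; the seed x0 must be one of
   the joined elements (it is then absorbed by idempotence), which avoids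
   needing a bottom element. *)
Definition njoin (m : nat) (x0 : L) (P : pred 'I_m) (x : 'I_m -> L) : L :=
  \big[Order.join/x0]_(j | P j) x j.

(* an index of 'I_n.+1 different from i (valid when n >= 1) *)
Definition other_index (n : nat) (i : 'I_n.+1) : 'I_n.+1 :=
  if i == ord0 then ord_max else ord0.

Definition n_prime_filter (n : nat) (F : L -> Prop) : Prop :=
  is_filter F /\
  forall x : 'I_n.+1 -> L,
    F (njoin (x ord0) predT x) ->
    exists i : 'I_n.+1, F (njoin (x (other_index i)) (fun j => j != i) x).

(* F is the intersection of the family (G i)_{i < k} (k = 0 gives all of L) *)
Definition is_intersection (k : nat) (G : 'I_k -> L -> Prop) (F : L -> Prop) : Prop :=
  forall x : L, F x <-> (forall i : 'I_k, G i x).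

(* lattice homomorphism into 2^n, represented as the powerset {set 'I_n}
   (Boolean lattice with n atoms) with intersection / union *)
Definition lattice_hom_2n (n : nat) (h : L -> {set 'I_n}) : Prop :=
  (forall x y : L, h (x `&` y) = h x :&: h y) /\
  (forall x y : L, h (x `|` y) = h x :|: h y).

End LatticeDefs.

(* Call a finite family (c_i) irredundant for F when F contains the join of
   all the c_i but none of the joins of all but one of them; an n-prime
   filter is a filter without irredundant families of size n + 1.  If (c_i)
   is irredundant of maximal size k, the sets
   G_i = {z | z v \/_{j <> i} c_j \in F} are filters containing F, and any
   failure of G_i to be prime, or any point of the intersection of the G_i
   outside F, can be spliced into (c_i) to give an irredundant family of size
   k + 1.  Conversely, if F is the intersection of k <= n prime upsets G_i and
   x_1 v ... v x_{n+1} \in F, each G_i contains some x_j, and by pigeonhole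
   some index j0 is never needed, so the join of the x_j (j <> j0) is in F.
   Prime filters G_1, ..., G_n correspond to the homomorphism
   z |-> {i | z \in G_i} into 2^n. *)
From HB Require Import structures.
From mathcomp Require Import all_boot all_order.
From mathcomp Require Import boolp.
Import Order.Theory.
Local Open Scope order_scope.

Section Families.
Context {d : Order.disp_t} {L : distrLatticeType d}.

(* For an upset F this says that the join of the subfamily selected by P lies
   in F; it makes sense without a bottom element when P selects nothing. *)
Definition join_in {I : finType} (F : L -> Prop) (P : pred I) (x : I -> L) :=
  forall w, (forall j, P j -> x j <= w) -> F w.

Definition irredundant {I : finType} (F : L -> Prop) (x : I -> L) :=
  join_in F predT x /\ forall i, ~ join_in F (predC1 i) x.

Definition bounded_intersection (n : nat) (Q : (L -> Prop) -> Prop)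
    (F : L -> Prop) :=
  exists (k : nat) (G : 'I_k -> L -> Prop),
    (k <= n)%N /\ (forall i, Q (G i)) /\ is_intersection G F.

Definition top_preimage (n : nat) (F : L -> Prop) :=
  exists h : L -> {set 'I_n},
    lattice_hom_2n h /\ forall x : L, F x <-> h x = [set: 'I_n].

Lemma join_inPn {I : finType} {F : L -> Prop} {P : pred I} {x : I -> L} :
  ~ join_in F P x -> exists2 w, (forall j, P j -> x j <= w) & ~ F w.
Proof.
move=> notF; apply: contrapT => nw; apply: notF => w ub.
by apply: contrapT => nFw; apply: nw; exists w.
Qed.

Lemma irredundant_comp (I J : finType) (F : L -> Prop) (f : J -> I)
    (x : I -> L) :
  bijective f -> irredundant F x -> irredundant F (x \o f).
Proof.
case=> g fK gK [Fx x_irr]; split.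
  by move=> w ub; apply: Fx => i _; rewrite -(gK i); exact: ub.
move=> j Fj; apply: (x_irr (f j)) => w ub; apply: Fj => j' j'j.
by apply: ub; rewrite /= (inj_eq (can_inj fK)).
Qed.

Lemma njoin_ub m x0 (P : pred 'I_m) (x : 'I_m -> L) j :
  P j -> x j <= njoin x0 P x.
Proof. by move=> Pj; rewrite /njoin (bigD1 j) //= leUl. Qed.

Lemma njoin_lub m x0 (P : pred 'I_m) (x : 'I_m -> L) u :
  x0 <= u -> (forall j, P j -> x j <= u) -> njoin x0 P x <= u.
Proof.
move=> x0u ub; apply: (big_ind (fun z => z <= u)) => // a b au bu.
by rewrite leUx au bu.
Qed.

Lemma other_index_neq n (i : 'I_n.+1) : (0 < n)%N -> other_index i != i.
Proof.
case: n i => // n i _; rewrite /other_index.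
by case: (eqVneq i ord0) => [->|]; rewrite // eq_sym.
Qed.

Lemma n_prime_filter_irredundant {n : nat} {F : L -> Prop} : (0 < n)%N ->
  n_prime_filter n F -> forall x : 'I_n.+1 -> L, ~ irredundant F x.
Proof.
move=> n_gt0 [[Fup _] n_primeF] x [Fx x_irr].
have [i Fi] : exists i, F (njoin (x (other_index i)) (predC1 i) x).
  by apply: n_primeF; apply: Fx => j _; exact: njoin_ub.
apply: (x_irr i) => w ub; apply: Fup Fi; apply: njoin_lub => //.
exact/ub/other_index_neq.
Qed.

Lemma prime_upset_njoin {G : L -> Prop} {m : nat} {P : pred 'I_m}
    {x : 'I_m -> L} {i0 : 'I_m} :
  prime_upset G -> P i0 -> G (njoin (x i0) P x) -> exists2 j, P j & G (x j).
Proof.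
move=> [_ primeG] Pi0.
apply: (big_ind (fun z => G z -> exists2 j, P j & G (x j))).
- by exists i0.
- by move=> a b IHa IHb /primeG [].
- by move=> j Pj Gj; exists j.
Qed.

Lemma filter_meetP (F : L -> Prop) x y :
  is_filter F -> F (x `&` y) <-> F x /\ F y.
Proof.
move=> [Fup FI]; split=> [Fxy|[]]; last exact: FI.
by split; apply: Fup Fxy; [exact: leIl | exact: leIr].
Qed.

Lemma prime_upset_joinP (F : L -> Prop) x y :
  prime_upset F -> F (x `|` y) <-> F x \/ F y.
Proof.
move=> [Fup FU]; split=> [/FU //|[]]; apply: Fup; [exact: leUl | exact: leUr].
Qed.

Lemma join_in_meetl {I : finType} {F : L -> Prop} {c : I -> L} {t : L} :
  is_filter F -> F t -> join_in F predT c ->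
  join_in F predT (fun j => t `&` c j).
Proof.
move=> [Fup FI] Ft Fc u ub; case: (pickP (@predT I)) => [i0 _|I0]; last first.
  by apply: (Fc u) => j; rewrite I0.
pose s := \big[Order.join/c i0]_j c j.
have Fus : F (u `|` s).
  apply: (Fc (u `|` s)) => j _.
  by rewrite (le_trans _ (leUr s u)) // /s (bigD1 j) ?leUl.
have Fut : F (u `|` t) by apply: Fup Ft; exact: leUr.
apply: Fup (FI _ _ Fut Fus); rewrite -joinIr leUx lexx /=.
apply: (big_ind (fun z => t `&` z <= u)) => [|a b au bu|j _]; last exact: ub.
- exact: ub.
- by rewrite meetUr leUx au bu.
Qed.

End Families.

Section CofactorFilters.
Context {d : Order.disp_t} {L : distrLatticeType d} {I : finType}.
Variables (F : L -> Prop) (c : I -> L).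
Hypotheses (filterF : is_filter F) (c_irr : irredundant F c)
  (c_maximal : forall y : option I -> L, ~ irredundant F y).

(* z v \/_{j <> i} c_j \in F, phrased so that no bottom is needed when
   i is the only index. *)
Definition cofactor (i : I) (z : L) : Prop :=
  forall w, z <= w -> (forall j, j != i -> c j <= w) -> F w.

Lemma cofactorPn i z :
  ~ cofactor i z -> exists w, [/\ z <= w, forall j, j != i -> c j <= w & ~ F w].
Proof.
move=> notG; apply: contrapT => nw; apply: notG => w zw cw.
by apply: contrapT => nFw; apply: nw; exists w.
Qed.

Lemma cofactor_filter i : is_filter (cofactor i).
Proof.
split=> [x y xy Gx w yw|x y Gx Gy w xyw cw]; first exact: Gx (le_trans xy yw).
have cw' z j : j != i -> c j <= w `|` z by move/cw/le_trans; apply; exact: leUl.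
have Fwx : F (w `|` x) by apply: Gx; [exact: leUr | exact: cw'].
have Fwy : F (w `|` y) by apply: Gy; [exact: leUr | exact: cw'].
have := filterF.2 _ _ Fwx Fwy; rewrite -joinIr; apply: filterF.1.
by rewrite leUx lexx.
Qed.

Lemma le_cofactor i x : F x -> cofactor i x.
Proof. by move=> Fx w xw _; apply: filterF.1 Fx. Qed.

(* If a v b is in G_i but a and b are not, putting a & c_i and b & c_i in
   place of c_i gives a larger irredundant family. *)
Lemma cofactor_prime i : prime_upset (cofactor i).
Proof.
split=> [|a b Gab]; first exact: (cofactor_filter i).1.
apply: contrapT => /not_orP [/cofactorPn [wa [awa cwa nFwa]]].
move=> /cofactorPn [wb [bwb cwb nFwb]].
pose y := oapp (fun j => if j == i then b `&` c i else c j) (a `&` c i).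
have yj j : j != i -> y (Some j) = c j by move=> /negbTE /= ->.
apply: (c_maximal y); split=> [u ub|[j|] Fj].
- have cu j : j != i -> c j <= u by move=> ji; rewrite -(yj j ji); exact: ub.
  have Fu : F (u `|` (a `|` b)).
    by apply: Gab; [exact: leUr | move=> j /cu/le_trans; apply; exact: leUl].
  apply: (join_in_meetl filterF Fu c_irr.1 u) => j _.
  have [->|ji] := eqVneq j i; last exact: le_trans (leIr _ _) (cu j ji).
  have := ub None isT; have := ub (Some i) isT; rewrite /= eqxx => biu aiu.
  by rewrite !meetUl !leUx leIl aiu biu.
- have [ji|ji] := eqVneq j i.
  + subst j; apply: nFwa; apply: Fj => -[l|] /= li.
      by rewrite (negbTE (li : l != i)) cwa.
    exact: le_trans (leIl _ _) awa.
  + have [v cv nFv] := join_inPn (c_irr.2 j); apply: nFv; apply: Fj.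
    have civ : c i <= v by apply: cv; rewrite /= eq_sym.
    move=> -[l|] /= lj; last exact: le_trans (leIr _ _) civ.
    by case: ifP => _; [exact: le_trans (leIr _ _) civ | exact: cv].
- apply: nFwb; apply: Fj => -[l|] //= _.
  by case: ifPn => [_|li]; [exact: le_trans (leIl _ _) bwb | exact: cwb].
Qed.

(* If x is in every G_i but not in F, replacing each c_j by x & c_j and
   adding the meet of witnesses that the c_j, j <> i, do not join into F
   gives a larger irredundant family. *)
Lemma bigcap_cofactor x : (forall i, cofactor i x) -> F x.
Proof.
move=> Gx; apply: contrapT => nFx.
case: (pickP (@predT I)) => [i0 _|I0]; last first.
  by apply: nFx; apply: (c_irr.1 x) => j; rewrite I0.
have witness i : exists w, (forall j, j != i -> c j <= w) /\ ~ F w.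
  by have [w cw nFw] := join_inPn (c_irr.2 i); exists w.
have [v vP] := choice witness.
pose e := \big[Order.meet/v i0]_i v i.
have ev i : e <= v i by rewrite /e (bigD1 i) ?leIl.
have Fvx i : F (v i `|` x).
  apply: Gx; first exact: leUr.
  by move=> j /(vP i).1 /le_trans; apply; exact: leUl.
have Fex : F (e `|` x).
  apply: (big_ind (fun z => F (z `|` x))) => // a b Fa Fb.
  by rewrite joinIl; exact: filterF.2.
apply: (c_maximal (oapp (fun j => x `&` c j) e)); split=> [u ub|[i|] Fi].
- have Fux : F (u `|` x) by apply: filterF.1 Fex; rewrite leU2 // (ub None).
  apply: (join_in_meetl filterF Fux c_irr.1 u) => j _.
  by rewrite meetUl leUx leIl (ub (Some j)).
- apply: (vP i).2; apply: Fi => -[j|] /= ji; last exact: ev.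
  exact: le_trans (leIr _ _) ((vP i).1 j ji).
- by apply: nFx; apply: Fi => -[j|] //= _; exact: leIl.
Qed.

End CofactorFilters.

Section Decomposition.
Context {d : Order.disp_t} {L : distrLatticeType d} {F : L -> Prop}.
Hypothesis filterF : is_filter F.

Lemma irredundant_unlift k (y : option 'I_k -> L) :
  irredundant F y -> irredundant F (y \o unlift ord0).
Proof.
apply: irredundant_comp; exists (oapp (lift ord0) ord0) => [p|[j|]] /=.
- by case: unliftP => [j ->|->].
- by rewrite liftK.
- by rewrite unlift_none.
Qed.

Lemma intersection_of_irredundant {k : nat} {c : 'I_k -> L} :
  irredundant F c -> (forall y : 'I_k.+1 -> L, ~ irredundant F y) ->
  exists G : 'I_k -> L -> Prop,
    (forall i, prime_filter (G i)) /\ is_intersection G F.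
Proof.
move=> c_irr no_irr.
have c_max (y : option 'I_k -> L) : ~ irredundant F y.
  by move/irredundant_unlift/no_irr.
exists (cofactor F c); split=> [i|x].
  by split; [exact: cofactor_filter | exact: cofactor_prime].
by split=> [Fx i|]; [exact: le_cofactor | exact: bigcap_cofactor].
Qed.

Lemma empty_of_no_irredundant :
  (forall y : 'I_0 -> L, ~ irredundant F y) ->
  (forall y : 'I_1 -> L, ~ irredundant F y) -> forall x, ~ F x.
Proof.
move=> no0 no1 x Fx; apply: (no1 (fun=> x)); split=> [w ub|i Fi].
  exact: filterF.1 _ _ (ub ord0 isT) Fx.
apply: (no0 (fun=> x)); split=> [w _|[] //].
by apply: Fi => j; rewrite /= (ord1 j) (ord1 i) eqxx.
Qed.

Lemma prime_filter_decomposition {m : nat} :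
  (forall y : 'I_m.+1 -> L, ~ irredundant F y) ->
  bounded_intersection (maxn m 1) prime_filter F.
Proof.
elim: m => [|m IH] no_irr.
  have [[c c_irr]|/forallNP no_c] :=
    pselect (exists c : 'I_0 -> L, irredundant F c).
    by have [G GF] := intersection_of_irredundant c_irr no_irr; exists 0, G.
  have F0 := empty_of_no_irredundant no_c no_irr.
  exists 1, (fun=> F); split=> //; split=> [_|x].
    by split=> //; split=> [|a b /F0 []]; exact: filterF.1.
  by split=> [Fx _ //|]; apply; exact: ord0.
have [[c c_irr]|/forallNP no_c] :=
  pselect (exists c : 'I_m.+1 -> L, irredundant F c).
  have [G GF] := intersection_of_irredundant c_irr no_irr.
  by exists m.+1, G; rewrite leq_maxl.
have [k [G [km GF]]] := IH no_c.
exists k, G; split=> //; apply: leq_trans km _.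
by rewrite geq_max !leq_max ltnW ?orbT.
Qed.

End Decomposition.

Section Equivalences.
Context {d : Order.disp_t} {L : distrLatticeType d}.
Variables (n : nat) (F : L -> Prop).

Lemma n_prime_bounded_intersection :
  (0 < n)%N -> n_prime_filter n F -> bounded_intersection n prime_filter F.
Proof.
move=> n_gt0 n_primeF.
have no_irr := n_prime_filter_irredundant n_gt0 n_primeF.
have := prime_filter_decomposition n_primeF.1 no_irr.
by rewrite (maxn_idPl n_gt0).
Qed.

Lemma bounded_intersection_prime_upset :
  bounded_intersection n prime_filter F ->
  is_filter F /\ bounded_intersection n prime_upset F.
Proof.
move=> [k [G [kn [primeG FG]]]]; split; last first.
  by exists k, G; split=> //; split=> // i; exact: (primeG i).2.
split=> [x y xy /FG Gx|x y /FG Gx /FG Gy]; apply/FG => i.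
  exact: (primeG i).1.1 _ _ xy (Gx i).
exact: (primeG i).1.2 _ _ (Gx i) (Gy i).
Qed.

(* Each G_i contains some x_(g i), and g misses an index j0 since k <= n. *)
Lemma bounded_intersection_n_prime :
  is_filter F -> bounded_intersection n prime_upset F -> n_prime_filter n F.
Proof.
move=> filterF [k [G [kn [primeG FG]]]]; split=> // x /FG Gx.
have pick_j i : exists j, G i (x j).
  by have [j _ Gj] := prime_upset_njoin (primeG i) isT (Gx i); exists j.
have [g Gg] := choice pick_j.
have [j0 j0g] : exists j0, j0 \notin codom g.
  apply: contrapT => /forallNP all_g.
  have : (#|'I_n.+1| <= size (codom g))%N.
    apply: leq_trans (card_size _); apply: subset_leq_card.
    by apply/subsetP => j _; apply/negPn/negP; exact: all_g.
  by rewrite size_codom !card_ord ltnNge kn.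
exists j0; apply/FG => i; apply: (primeG i).1 (Gg i); apply: njoin_ub.
by apply: contraNneq j0g => <-; exact: codom_f.
Qed.

(* Pad the family with copies of the whole lattice, a prime filter. *)
Lemma bounded_intersection_pad :
  bounded_intersection n prime_filter F ->
  exists G : 'I_n -> L -> Prop,
    (forall i, prime_filter (G i)) /\ is_intersection G F.
Proof.
move=> [k [G [kn [primeG FG]]]].
pose Gn (i : 'I_n) z := forall j : 'I_k, val j = val i -> G j z.
exists Gn; split=> [i|x].
  have [ik|ki] := ltnP i k.
    suff -> : Gn i = G (Ordinal ik) by exact: primeG.
    apply/funext => z; apply/propext.
    split=> [/(_ (Ordinal ik) erefl) //|Gz j ji].
    by rewrite (_ : j = Ordinal ik) //; exact: val_inj.
  suff -> : Gn i = fun=> True by split; split=> *; auto.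
  apply/funext => z; apply/propext; split=> // _ j ji.
  by have := ltn_ord j; rewrite ji ltnNge ki.
split=> [Fx j i _|Gx]; first exact: (FG x).1.
by apply/FG => j; exact: (Gx (widen_ord kn j)).
Qed.

Lemma prime_filters_top_preimage (G : 'I_n -> L -> Prop) :
  (forall i, prime_filter (G i)) -> is_intersection G F -> top_preimage n F.
Proof.
move=> primeG FG; exists (fun z => [set i | `[< G i z >]]); split; first split.
- move=> x y; apply/setP => i; rewrite !inE -asbool_and.
  exact/asbool_equiv_eq/filter_meetP/(primeG i).1.
- move=> x y; apply/setP => i; rewrite !inE -asbool_or.
  exact/asbool_equiv_eq/prime_upset_joinP/(primeG i).2.
move=> x; rewrite FG; split=> [Gx|/setP Gx i].
  by apply/setP => i; rewrite !inE; apply/asboolP.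
by have := Gx i; rewrite !inE => /asboolP.
Qed.

Lemma top_preimage_bounded_intersection :
  top_preimage n F -> bounded_intersection n prime_filter F.
Proof.
move=> [h [[hI hU] Fh]]; exists n, (fun i z => i \in h z); split=> //; split.
  move=> i; have hup : upset (fun z => i \in h z).
    by move=> x y /join_idPr <-; rewrite hU inE => ->.
  split; split=> //; first by move=> x y; rewrite hI inE => -> ->.
  by move=> a b; rewrite hU inE => /orP.
move=> x; rewrite Fh; split=> [-> i|hx]; first exact: in_setT.
by apply/setP => i; rewrite inE hx.
Qed.

End Equivalences.

Theorem mainTheorem7 (d : Order.disp_t) (L : distrLatticeType d) (n : nat)
  (hn : (1 <= n)%N) (F : L -> Prop) (hF : upset F) :
  [/\ (n_prime_filter n F <->
        (is_filter F /\ exists (k : nat) (G : 'I_k -> L -> Prop),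
           (k <= n)%N /\ (forall i, prime_upset (G i)) /\ is_intersection G F)),
      (n_prime_filter n F <->
        exists (k : nat) (G : 'I_k -> L -> Prop),
           (k <= n)%N /\ (forall i, prime_filter (G i)) /\ is_intersection G F)
    & (n_prime_filter n F <->
        exists h : L -> {set 'I_n},
           lattice_hom_2n h /\ forall x : L, F x <-> h x = [set: 'I_n])].
Proof.
have i_iii := @n_prime_bounded_intersection _ _ n F hn.
have iii_ii := @bounded_intersection_prime_upset _ _ n F.
have ii_i : is_filter F /\ bounded_intersection n prime_upset F ->
    n_prime_filter n F.
  by case; exact: bounded_intersection_n_prime.
have iii_iv : bounded_intersection n prime_filter F -> top_preimage n F.
  move/bounded_intersection_pad => [G [primeG FG]].
  exact: prime_filters_top_preimage FG.
have iv_iii := @top_preimage_bounded_intersection _ _ n F.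
split; split.
- by move/i_iii/iii_ii.
- exact: ii_i.
- exact: i_iii.
- by move/iii_ii/ii_i.
- by move/i_iii/iii_iv.
- by move/iv_iii/iii_ii/ii_i.
Qed.
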